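(* Let $S$ be an infinite finitely generated cancellative semigroup that is not a group. Then $|\Omega S|=1$ or $|\Omega S|\ge\aleph_0$.
   Context: $S$ is cancellative if both $ax=ay\Rightarrow x=y$ and $xa=ya\Rightarrow x=y$ for all $a,x,y\in S$. A digraph on $\Omega$ is a subset $\Gamma\subseteq\Omega\times\Omega$. A path is a sequence of pairwise distinct vertices $(v_0,v_1,\ldots)$ with $(v_i,v_{i+1})\in\Gamma$ (length 0 allowed); a ray is an infinite path; an anti-ray is an infinite sequence of distinct vertices with $(v_{i+1},v_i)\in\Gamma$. For infinite $\Sigma',\Sigma\subseteq\Omega$, $\Sigma'\preccurlyeq\Sigma$ means there are infinitely many pairwise vertex-disjoint paths from vertices of $\Sigma'$ to vertices of $\Sigma$. On rays and anti-rays $\preccurlyeq$ is a preorder with associated equivalence $\approx$; the ends are the $\approx$-classes of rays and anti-rays, and $\Omega\Gamma$ is the poset of ends. The right Cayley graph $\Gamma_r(S,A)$ has vertex set $S$ and edges $(x,xa)$, $x\in S$, $a\in A$. For finitely generated $S$, $\Omega S:=\Omega\Gamma_r(S,A)$ for any finite generating set $A$ (well defined up to isomorphism). *)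

From Stdlib Require Import List.
Import ListNotations.
Set Implicit Arguments.

Section Defs.
Variable V : Type.

Definition digraph := V -> V -> Prop.

Fixpoint edges_along (G : digraph) (l : list V) : Prop :=
  match l with
  | x :: ((y :: _) as t) => G x y /\ edges_along G t
  | _ => True
  end.

Definition fin_path (G : digraph) (p : list V) : Prop :=
  p <> [] /\ NoDup p /\ edges_along G p.

Definition path_from_to (G : digraph) (S' S : V -> Prop) (p : list V) : Prop :=
  fin_path G p /\ (exists x t, p = x :: t /\ S' x) /\
  (exists y h, p = h ++ [y] /\ S y).

Definition preceq (G : digraph) (S' S : V -> Prop) : Prop :=
  exists P : nat -> list V,
    (forall i, path_from_to G S' S (P i)) /\
    (forall i j, i <> j -> forall x, In x (P i) -> ~ In x (P j)).

Definition injective_seq (v : nat -> V) : Prop :=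
  forall i j, v i = v j -> i = j.

Definition is_ray (G : digraph) (v : nat -> V) : Prop :=
  injective_seq v /\ forall i, G (v i) (v (S i)).

Definition is_antiray (G : digraph) (v : nat -> V) : Prop :=
  injective_seq v /\ forall i, G (v (S i)) (v i).

Definition ray_or_antiray (G : digraph) (v : nat -> V) : Prop :=
  is_ray G v \/ is_antiray G v.

Definition vset (v : nat -> V) : V -> Prop := fun x => exists i, v i = x.

Definition end_equiv (G : digraph) (v w : nat -> V) : Prop :=
  preceq G (vset v) (vset w) /\ preceq G (vset w) (vset v).

(* |ΩΓ| = 1 : there is an end, and all rays/anti-rays lie in the same end. *)
Definition one_end (G : digraph) : Prop :=
  exists v, ray_or_antiray G v /\
    forall w, ray_or_antiray G w -> end_equiv G v w.

(* |ΩΓ| ≥ ℵ0 : there are infinitely many (countably many pairwise distinct) ends,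
   i.e. an injection ℕ → ΩΓ, given by pairwise inequivalent representatives. *)
Definition infinitely_many_ends (G : digraph) : Prop :=
  exists f : nat -> nat -> V,
    (forall n, ray_or_antiray G (f n)) /\
    (forall n m, n <> m -> ~ end_equiv G (f n) (f m)).

End Defs.

Section Semigroups.
Variable S : Type.
Variable mul : S -> S -> S.

Definition associative := forall x y z, mul x (mul y z) = mul (mul x y) z.

Definition cancellative :=
  (forall a x y, mul a x = mul a y -> x = y) /\
  (forall a x y, mul x a = mul y a -> x = y).

Definition is_group :=
  exists e, (forall x, mul e x = x /\ mul x e = x) /\
            (forall x, exists y, mul x y = e /\ mul y x = e).

Definition infinite_type := ~ exists l : list S, forall x, In x l.

Inductive generated (A : list S) : S -> Prop :=
  | gen_base : forall a, In a A -> generated A a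
  | gen_mul : forall x a, generated A x -> In a A -> generated A (mul x a).

Definition generates (A : list S) := forall x, generated A x.

Definition right_cayley (A : list S) : digraph S :=
  fun x y => exists a, In a A /\ y = mul x a.

End Semigroups.

(* If some ray or anti-ray v misses a principal right ideal xS, then the left translates
   x^n v are rays (or anti-rays) no two of which are equivalent: every path starting in
   x^m v stays inside the right ideal x^m S, and by left cancellation x^n v meets x^m S
   only if v meets xS.  Otherwise every ray and anti-ray meets every xS.  As S is not a
   group, some generator a has no right inverse, and then f(ar) <> f for all f, r; this
   rules out anti-rays, makes (a^n) a ray, and shows that a ray v eventually leaves every
   finite set of right ideals.  Hence any two rays are joined by paths avoiding any given
   finite set of vertices, so there is exactly one end. *)

From Stdlib Require Import List Arith Lia Classical ClassicalEpsilon.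
Import ListNotations.

Section Paths.
Variable V : Type.
Variable G : digraph V.

Lemma last_cons (l : list V) : forall x d, last (x :: l) d = last l x.
Proof.
  induction l as [|b l IH]; intros x d; [reflexivity|].
  change (last (b :: l) d = last (b :: l) x). now rewrite !IH.
Qed.

Lemma last_app_cons (l1 l2 : list V) (x d : V) : last (l1 ++ x :: l2) d = last l2 x.
Proof.
  induction l1 as [|b l1 IH]; simpl; [apply last_cons|].
  rewrite <- IH. destruct l1; reflexivity.
Qed.

Lemma edges_along_app_r (l1 l2 : list V) : edges_along G (l1 ++ l2) -> edges_along G l2.
Proof.
  induction l1 as [|b l1 IH]; simpl; auto.
  intro H. apply IH. destruct (l1 ++ l2); simpl in *; tauto.
Qed.

Lemma edges_along_snoc (l : list V) : forall y z,
  edges_along G (y :: l) -> G (last l y) z -> edges_along G (y :: l ++ [z]).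
Proof.
  induction l as [|b l IH]; intros y z Hl Hz; simpl in *; [tauto|].
  destruct Hl as [Hyb Hl]. split; auto. apply IH; auto. now rewrite <- last_cons with (d := y).
Qed.

Lemma edges_along_closed (P : V -> Prop) :
  (forall x y, G x y -> P x -> P y) ->
  forall l x, edges_along G (x :: l) -> P x -> forall q, In q (x :: l) -> P q.
Proof.
  intros HP. induction l as [|b l IH]; intros x Hl Hx q Hq.
  - destruct Hq as [<-|[]]. exact Hx.
  - destruct Hl as [Hxb Hl]. destruct Hq as [<-|Hq]; [exact Hx|].
    apply (IH b); eauto.
Qed.

(* If x recurs on the path built from the tail, the loop through x is cut off by keeping
   the suffix of that path starting at x. *)
Lemma walk_to_path (l : list V) : forall x, edges_along G (x :: l) ->
  exists t, fin_path G (x :: t) /\ last t x = last l x /\ incl (x :: t) (x :: l).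
Proof.
  induction l as [|b l IH]; intros x Hl.
  - exists []. repeat split; try easy.
    constructor; [intros []|constructor].
  - destruct Hl as [Hxb Hl].
    destruct (IH b Hl) as [t [[_ [Hnd He]] [Hlast Hincl]]].
    destruct (classic (In x (b :: t))) as [Hin|Hnin].
    + destruct (in_split _ _ Hin) as [p1 [p2 E]].
      exists p2. rewrite E in Hnd, He. repeat split.
      * discriminate.
      * exact (NoDup_app_remove_l _ _ Hnd).
      * exact (edges_along_app_r _ _ He).
      * rewrite <- (last_app_cons p1 p2 x b), <- E, last_cons, Hlast.
        symmetry. apply last_cons.
      * intros q [<-|Hq]; [now left|]. right. apply Hincl.
        rewrite E. apply in_or_app. right. now right.
    + exists (b :: t). repeat split.
      * discriminate.
      * now constructor.
      * exact Hxb.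
      * exact He.
      * rewrite last_cons, Hlast. symmetry. apply last_cons.
      * intros q [<-|Hq]; [now left|]. right. now apply Hincl.
Qed.

Lemma path_from_to_of_path (S1 S2 : V -> Prop) (x : V) (t : list V) :
  fin_path G (x :: t) -> S1 x -> S2 (last t x) -> path_from_to G S1 S2 (x :: t).
Proof.
  intros Hp H1 H2. split; [exact Hp|]. split; [now exists x, t|].
  exists (last t x), (removelast (x :: t)). split; [|exact H2].
  rewrite <- (last_cons t x x). now apply app_removelast_last.
Qed.

Fixpoint used_vertices (g : list V -> list V) (n : nat) : list V :=
  match n with
  | 0 => []
  | S n => g (used_vertices g n) ++ used_vertices g n
  end.

Lemma used_vertices_incl (g : list V -> list V) i j :
  i < j -> incl (g (used_vertices g i)) (used_vertices g j).
Proof.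
  induction j as [|j IH]; intros Hij x Hx; [lia|].
  simpl. apply in_or_app. destruct (Nat.eq_dec i j) as [->|Hne]; [now left|].
  right. apply IH; [lia|exact Hx].
Qed.

(* The n-th path is chosen to avoid all vertices of the previous ones. *)
Lemma preceq_of_avoiding (S1 S2 : V -> Prop) :
  (forall F, exists p, path_from_to G S1 S2 p /\ forall q, In q p -> ~ In q F) ->
  preceq G S1 S2.
Proof.
  intro H.
  pose (g F := proj1_sig (constructive_indefinite_description _ (H F))).
  assert (Hg : forall F, path_from_to G S1 S2 (g F) /\ forall q, In q (g F) -> ~ In q F).
  { intro F. exact (proj2_sig (constructive_indefinite_description _ (H F))). }
  exists (fun n => g (used_vertices g n)). split; [intro i; apply Hg|].
  intros i j Hij x Hi Hj.
  destruct (Nat.lt_total i j) as [Hlt|[Heq|Hgt]]; [|lia|].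
  - exact (proj2 (Hg _) x Hj (used_vertices_incl g i j Hlt x Hi)).
  - exact (proj2 (Hg _) x Hi (used_vertices_incl g j i Hgt x Hj)).
Qed.

End Paths.

Section CancellativeSemigroup.
Variable T : Type.
Variable mul : T -> T -> T.
Hypothesis assoc : associative mul.
Hypothesis canc : cancellative mul.
Variable A : list T.

Notation Cay := (right_cayley mul A).

Definition in_rideal (z y : T) : Prop := exists s, y = mul z s.

Definition is_identity (e : T) : Prop := forall y, mul e y = y /\ mul y e = y.

Definition has_right_inverse (a : T) : Prop := exists r, is_identity (mul a r).

Lemma in_rideal_trans x y z : in_rideal x y -> in_rideal y z -> in_rideal x z.
Proof. intros [s ->] [s' ->]. exists (mul s s'). symmetry. apply assoc. Qed.

Lemma in_rideal_cayley x y : Cay x y -> in_rideal x y.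
Proof. intros [a [_ ->]]. now exists a. Qed.

Lemma ray_in_rideal v : is_ray Cay v -> forall i j, i < j -> in_rideal (v i) (v j).
Proof.
  intros [_ Hv] i j. induction j as [|j IH]; intro Hij; [lia|].
  destruct (Nat.eq_dec i j) as [->|Hne]; [now apply in_rideal_cayley|].
  apply (in_rideal_trans _ (v j)); [apply IH; lia|apply in_rideal_cayley, Hv].
Qed.

Lemma ray_rideal_antitone v : is_ray Cay v ->
  forall i j f, i <= j -> in_rideal (v j) f -> in_rideal (v i) f.
Proof.
  intros Hv i j f Hij Hf. destruct (Nat.eq_dec i j) as [->|Hne]; [exact Hf|].
  apply (in_rideal_trans _ (v j)); [apply ray_in_rideal; auto; lia|exact Hf].
Qed.

Lemma antiray_in_rideal w : is_antiray Cay w -> forall i j, i < j -> in_rideal (w j) (w i).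
Proof.
  intros [_ Hw] i j. induction j as [|j IH]; intro Hij; [lia|].
  destruct (Nat.eq_dec i j) as [->|Hne]; [now apply in_rideal_cayley|].
  apply (in_rideal_trans _ (w j)); [apply in_rideal_cayley, Hw|apply IH; lia].
Qed.

Lemma identity_of_right_fixed f u : mul f u = f -> is_identity u.
Proof.
  intros E y. destruct canc as [Hl Hr].
  assert (Euy : mul u y = y) by (apply (Hl f); now rewrite assoc, E).
  split; [exact Euy|]. apply (Hr y). now rewrite <- assoc, Euy.
Qed.

Lemma right_fixed_no_right_inverse a :
  ~ has_right_inverse a -> forall f r, mul f (mul a r) <> f.
Proof. intros Ha f r E. apply Ha. exists r. exact (identity_of_right_fixed f _ E). Qed.

(* If every generator has a right inverse, they all share the unique identity and every
   element, being a product of generators, gets a right inverse; by left cancellation a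
   right inverse is also a left inverse. *)
Lemma exists_generator_without_right_inverse (s0 : T) :
  generates mul A -> ~ is_group mul -> exists a, In a A /\ ~ has_right_inverse a.
Proof.
  intros HA Hng. apply NNPP; intro Hall.
  assert (Hinv : forall a, In a A -> has_right_inverse a).
  { intros a Ha. apply NNPP; intro Hn. apply Hall. now exists a. }
  assert (Ha0 : exists a0, In a0 A) by (induction (HA s0); eauto).
  destruct Ha0 as [a0 Ha0]. destruct (Hinv a0 Ha0) as [r0 He].
  set (e := mul a0 r0) in *.
  assert (Huniq : forall e', is_identity e' -> e' = e).
  { intros e' He'. rewrite <- (proj1 (He e')) at 1. apply (proj2 (He' e)). }
  assert (Hright : forall x, generated mul A x -> exists y, mul x y = e).
  { intros x Hx. induction Hx as [a Ha|x a _ [y Hy] Ha].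
    - destruct (Hinv a Ha) as [r Hr]. exists r. now apply Huniq.
    - destruct (Hinv a Ha) as [r Hr]. apply Huniq in Hr.
      exists (mul r y). now rewrite <- assoc, (assoc a r y), Hr, (proj1 (He y)). }
  apply Hng. exists e. split; [exact He|].
  intro x. destruct (Hright x (HA x)) as [y Hy]. exists y. split; [exact Hy|].
  apply (proj1 canc x). now rewrite assoc, Hy, (proj1 (He x)), (proj2 (He x)).
Qed.

Definition rpow (a : T) (n : nat) : T := Nat.iter n (fun y => mul y a) a.

Lemma rpow_add a i k : rpow a (i + S k) = mul (rpow a i) (rpow a k).
Proof.
  induction k as [|k IH]; [now rewrite Nat.add_1_r|].
  rewrite Nat.add_succ_r. unfold rpow in *. rewrite !Nat.iter_succ, IH. symmetry. apply assoc.
Qed.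

Lemma rpow_mul_in_rideal a k : forall t, in_rideal a (mul (rpow a k) t).
Proof.
  induction k as [|k IH]; intro t; [now exists t|].
  unfold rpow in *. rewrite Nat.iter_succ, <- assoc. apply IH.
Qed.

Lemma rpow_not_identity a : ~ has_right_inverse a -> forall k, ~ is_identity (rpow a k).
Proof.
  intros Ha k Hid. destruct (rpow_mul_in_rideal a k (rpow a k)) as [s Es].
  apply Ha. exists s. rewrite <- Es, (proj1 (Hid _)). exact Hid.
Qed.

Lemma rpow_ray a : In a A -> ~ has_right_inverse a -> is_ray Cay (rpow a).
Proof.
  intros Hin Ha. split.
  - assert (Hneq : forall i k, rpow a (i + S k) <> rpow a i).
    { intros i k E. rewrite rpow_add in E.
      exact (rpow_not_identity a Ha k (identity_of_right_fixed _ _ E)). }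
    intros i j E. destruct (Nat.lt_total i j) as [Hlt|[Heq|Hgt]]; [exfalso|exact Heq|exfalso].
    + apply (Hneq i (j - S i)). rewrite E. f_equal. lia.
    + apply (Hneq j (i - S j)). rewrite <- E. f_equal. lia.
  - intro i. exists a. split; [exact Hin|]. unfold rpow. apply Nat.iter_succ.
Qed.

Lemma ray_or_antiray_lmul z v : ray_or_antiray Cay v -> ray_or_antiray Cay (fun i => mul z (v i)).
Proof.
  assert (Hinj : injective_seq v -> injective_seq (fun i => mul z (v i))).
  { intros Hv i j E. exact (Hv i j (proj1 canc z _ _ E)). }
  assert (Hedge : forall x y, Cay x y -> Cay (mul z x) (mul z y)).
  { intros x y [a [Ha ->]]. exists a. split; [exact Ha|]. apply assoc. }
  intros [[Hi He]|[Hi He]]; [left|right]; split; auto.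
Qed.

Lemma cayley_rideal_closed z x y : Cay x y -> in_rideal z x -> in_rideal z y.
Proof. intros Hxy Hx. exact (in_rideal_trans _ _ _ Hx (in_rideal_cayley _ _ Hxy)). Qed.

Lemma path_ends_in_rideal z (S1 S2 : T -> Prop) p :
  path_from_to Cay S1 S2 p -> (forall x, S1 x -> in_rideal z x) ->
  exists y, S2 y /\ in_rideal z y.
Proof.
  intros [[_ [_ He]] [[x [t [-> Hx]]] [y [h [Ep Hy]]]]] HS1.
  exists y. split; [exact Hy|].
  apply (edges_along_closed _ Cay _ (cayley_rideal_closed z) t x He (HS1 x Hx)).
  rewrite Ep. apply in_or_app. now right; left.
Qed.

Section AvoidingRay.
Variables (x : T) (v : nat -> T).
Hypothesis Hv : ray_or_antiray Cay v.
Hypothesis Havoid : forall j, ~ in_rideal x (v j).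

Let translate (n : nat) (i : nat) : T := mul (rpow x n) (v i).

Lemma translates_not_preceq n m : n < m -> ~ preceq Cay (vset (translate m)) (vset (translate n)).
Proof.
  intros Hnm [P [HP _]].
  destruct (path_ends_in_rideal (rpow x m) _ _ _ (HP 0)) as [y [[j <-] [t Et]]].
  { intros y [i <-]. now exists (v i). }
  unfold translate in Et.
  replace m with (n + S (m - S n)) in Et by lia.
  rewrite rpow_add, <- assoc in Et. apply (proj1 canc) in Et.
  apply (Havoid j). rewrite Et. apply rpow_mul_in_rideal.
Qed.

Lemma infinitely_many_ends_of_avoiding_ray : infinitely_many_ends Cay.
Proof.
  exists translate. split; [intro n; now apply ray_or_antiray_lmul|].
  intros n m Hnm [Hnm' Hmn]. destruct (Nat.lt_total n m) as [Hlt|[Heq|Hgt]].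
  - exact (translates_not_preceq n m Hlt Hmn).
  - exact (Hnm Heq).
  - exact (translates_not_preceq m n Hgt Hnm').
Qed.

End AvoidingRay.

Lemma generated_walk t : generated mul A t ->
  forall y, exists l, edges_along Cay (y :: l) /\ last l y = mul y t.
Proof.
  intros Ht y. induction Ht as [a Ha|s a _ [l [He Hl]] Ha].
  - exists [mul y a]. repeat split. now exists a.
  - exists (l ++ [mul (mul y s) a]). split.
    + apply edges_along_snoc; [exact He|]. rewrite Hl. now exists a.
    + rewrite last_last. symmetry. apply assoc.
Qed.

Section AllRightIdealsMet.
Hypothesis HA : generates mul A.
Hypothesis Hmeets : forall x v, ray_or_antiray Cay v -> exists j, in_rideal x (v j).
Variable a : T.
Hypothesis Ha : ~ has_right_inverse a.

Lemma no_antiray w : ~ is_antiray Cay w.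
Proof.
  intro Hw. destruct (Hmeets (mul (w 0) a) w (or_intror Hw)) as [j [t Ej]].
  destruct j as [|j].
  - apply (right_fixed_no_right_inverse a Ha (w 0) t). now rewrite assoc, <- Ej.
  - destruct (antiray_in_rideal w Hw 0 (S j) ltac:(lia)) as [c Ec].
    apply (right_fixed_no_right_inverse a Ha (w 0) (mul t c)).
    rewrite Ec at 2. now rewrite Ej, <- !assoc.
Qed.

Lemma ray_leaves_rideals v : is_ray Cay v -> forall f, exists i, ~ in_rideal (v i) f.
Proof.
  intros Hv f. destruct (Hmeets (mul f a) v (or_introl Hv)) as [i [t Ei]].
  exists i. intros [c Ec]. apply (right_fixed_no_right_inverse a Ha f (mul t c)).
  rewrite Ec at 2. now rewrite Ei, <- !assoc.
Qed.

Lemma ray_leaves_rideals_list v : is_ray Cay v ->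
  forall F : list T, exists i, forall f, In f F -> ~ in_rideal (v i) f.
Proof.
  intros Hv F. induction F as [|f F [i Hi]]; [now exists 0|].
  destruct (ray_leaves_rideals v Hv f) as [i' Hi'].
  exists (Nat.max i i'). intros g [<-|Hg] Hin.
  - apply Hi'. apply (ray_rideal_antitone v Hv _ (Nat.max i i')); [lia|exact Hin].
  - apply (Hi g Hg). apply (ray_rideal_antitone v Hv _ (Nat.max i i')); [lia|exact Hin].
Qed.

(* A path from v to w avoiding F: start at v (i+1), which lies in the right ideal v_i S
   missing F, and walk along generators to a vertex of w in v (i+1) S; right ideals are
   closed under the edges of the right Cayley graph. *)
Lemma rays_preceq v w : is_ray Cay v -> is_ray Cay w -> preceq Cay (vset v) (vset w).
Proof.
  intros Hv Hw. apply preceq_of_avoiding. intro F.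
  destruct (ray_leaves_rideals_list v Hv F) as [i Hi].
  destruct (Hmeets (v (S i)) w (or_introl Hw)) as [j [t Ej]].
  destruct (generated_walk t (HA t) (v (S i))) as [l [He Hl]].
  destruct (walk_to_path _ _ l _ He) as [p [Hp [Hlast Hincl]]].
  exists (v (S i) :: p). split.
  - apply path_from_to_of_path; [exact Hp|now exists (S i)|].
    exists j. now rewrite Hlast, Hl.
  - intros q Hq HqF. apply (Hi q HqF).
    apply (edges_along_closed _ Cay _ (cayley_rideal_closed (v i)) l (v (S i)) He).
    + apply in_rideal_cayley, (proj2 Hv).
    + now apply Hincl.
Qed.

Lemma one_end_of_all_rideals_met : In a A -> one_end Cay.
Proof.
  intro Hin. exists (rpow a). pose proof (rpow_ray a Hin Ha) as Hray.
  split; [now left|]. intros w [Hw|Hw]; [|now apply no_antiray in Hw].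
  split; now apply rays_preceq.
Qed.

End AllRightIdealsMet.

End CancellativeSemigroup.

Theorem mainTheorem13 (S : Type) (mul : S -> S -> S)
  (Hassoc : associative mul) (Hcanc : cancellative mul)
  (Hinf : infinite_type S) (Hng : ~ is_group mul)
  (A : list S) (HA : generates mul A) :
  one_end (right_cayley mul A) \/ infinitely_many_ends (right_cayley mul A).
Proof.
  (* Infiniteness only provides an element: a finite cancellative semigroup is a group. *)
  assert (s0 : exists s0 : S, True).
  { apply NNPP; intro Hempty. apply Hinf. exists []. intro x. apply Hempty. now exists x. }
  destruct s0 as [s0 _].
  destruct (classic (exists x v, ray_or_antiray (right_cayley mul A) v /\
                                 forall j, ~ in_rideal S mul x (v j))) as [Hmiss|Hmeet].
  - right. destruct Hmiss as [x [v [Hv Havoid]]].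
    exact (infinitely_many_ends_of_avoiding_ray S mul Hassoc Hcanc A x v Hv Havoid).
  - left.
    destruct (exists_generator_without_right_inverse S mul Hassoc Hcanc A s0 HA Hng)
      as [a [Hin Ha]].
    apply (one_end_of_all_rideals_met S mul Hassoc Hcanc A HA) with (a := a); [|exact Ha|exact Hin].
    intros x v Hv. apply NNPP; intro Hn. apply Hmeet. exists x, v. split; [exact Hv|].
    intros j Hj. apply Hn. now exists j.
Qed.
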